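(* Let $a,d$ be real numbers and let $T_n(t,\alpha,\delta)$ denote the general Eulerian polynomials defined below. Then for every integer $n\ge 0$ and every complex $t$ with $|t|<1$ (equivalently, as an identity of formal power series in $t$), $$-\frac{T_n(t,a-d,-d)}{(t-1)^{n+1}}=\sum_{j=0}^{\infty}t^j(a+jd)^n.$$
   Context: For real numbers $\alpha,\delta$, the general Eulerian numbers $A_{n,k}(\alpha,\delta)$ (integers $n\ge 0$, $k$) are defined by $A_{0,-1}(\alpha,\delta)=1$, $A_{n,k}(\alpha,\delta)=0$ whenever $k\ge n$ or $k\le -2$, and for $n\ge 1$, $-1\le k\le n-1$: $$A_{n,k}(\alpha,\delta)=(-\alpha+(k+2)\delta)A_{n-1,k}(\alpha,\delta)+(\alpha+(n-k-1)\delta)A_{n-1,k-1}(\alpha,\delta).$$ The general Eulerian polynomials are $T_n(t,\alpha,\delta)=\sum_{k=-1}^{n-1}A_{n,k}(\alpha,\delta)t^{k+1}$ (so $T_0=1$). In the claim, $T_n(t,a-d,-d)$ is this polynomial with $\alpha=a-d$, $\delta=-d$. Also $x^0=1$ for all $x$. *)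

From Stdlib Require Import Reals ZArith.
From Coquelicot Require Import Coquelicot.
Open Scope R_scope.

Fixpoint genEulerA (al de : R) (n : nat) (k : Z) : R :=
  match n with
  | O => if Z.eqb k (-1)%Z then 1 else 0
  | S n' =>
      if orb (Z.ltb k (-1)%Z) (Z.leb (Z.of_nat n) k) then 0
      else (- al + (IZR k + 2) * de) * genEulerA al de n' k
           + (al + (INR n - IZR k - 1) * de) * genEulerA al de n' (k - 1)%Z
  end.

(* T_n(t,alpha,delta) = sum_{k=-1}^{n-1} A_{n,k} t^{k+1}
   = sum_{m=0}^{n} A_{n,m-1} t^m, evaluated at complex t. *)
Definition genEulerT (n : nat) (t : C) (al de : R) : C :=
  sum_n (fun m => (RtoC (genEulerA al de n (Z.of_nat m - 1)%Z) * Cpow t m)%C) n.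

(* Let c_j = (a + j d)^n.  The operator delta, (delta x)_j = x_(j-1) - x_j
   (with x_(-1) = 0), multiplies the generating function sum_j x_j t^j by
   t - 1.  Since c is a polynomial of degree n in j, delta^(n+1) c is finitely
   supported: a Leibniz rule for delta against the linear weight a + j d shows
   that -(delta^(n+1) c)_j satisfies the defining recurrence of
   A_(n,j-1)(a-d,-d).  Hence (t - 1)^(n+1) sum_j c_j t^j = -T_n(t,a-d,-d);
   the series converges for |t| < 1 by the ratio test. *)
From Stdlib Require Import Reals ZArith Lia Lra FunctionalExtensionality.
From Coquelicot Require Import Coquelicot.
Open Scope R_scope.

Definition shift (x : nat -> R) (j : nat) : R :=
  match j with O => 0 | S j' => x j' end.

Definition delta (x : nat -> R) (j : nat) : R := shift x j - x j.

Definition lin_mul (a d : R) (x : nat -> R) (j : nat) : R := (a + INR j * d) * x j.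

Definition powseq (a d : R) (n j : nat) : R := (a + INR j * d) ^ n.

Lemma delta_shift (x : nat -> R) : delta (shift x) = shift (delta x).
Proof. apply functional_extensionality; intros [|j]; unfold delta, shift; ring. Qed.

Lemma delta_sub_scal (x y : nat -> R) (c : R) :
  delta (fun j => x j - c * y j) = fun j => delta x j - c * delta y j.
Proof. apply functional_extensionality; intros [|j]; unfold delta, shift; ring. Qed.

Lemma delta_lin_mul (a d : R) (x : nat -> R) :
  delta (lin_mul a d x) = fun j => lin_mul a d (delta x) j - d * shift x j.
Proof.
  apply functional_extensionality; intros [|j]; unfold delta, lin_mul, shift.
  - ring.
  - rewrite S_INR; ring.
Qed.

Lemma delta_iter_lin_mul (a d : R) (x : nat -> R) (k : nat) :
  Nat.iter (S k) delta (lin_mul a d x)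
  = fun j => lin_mul a d (Nat.iter (S k) delta x) j
             - INR (S k) * d * shift (Nat.iter k delta x) j.
Proof.
  induction k as [|k IHk].
  - simpl; rewrite delta_lin_mul.
    apply functional_extensionality; intros j; ring.
  - change (Nat.iter (S (S k)) delta (lin_mul a d x))
      with (delta (Nat.iter (S k) delta (lin_mul a d x))).
    rewrite IHk, delta_sub_scal, delta_lin_mul, delta_shift.
    apply functional_extensionality; intros j; cbv beta; rewrite (S_INR (S k)).
    simpl Nat.iter; set (y := Nat.iter k delta x).
    set (u := lin_mul a d _ j); set (v := shift (delta y) j); ring.
Qed.

Lemma delta_iter_powseq_S (a d : R) (n m : nat) :
  Nat.iter (S (S n)) delta (powseq a d (S n)) m
  = - (a + INR m * d) * Nat.iter (S n) delta (powseq a d n) m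
    + (a + INR m * d - INR (S (S n)) * d) * shift (Nat.iter (S n) delta (powseq a d n)) m.
Proof.
  replace (powseq a d (S n)) with (lin_mul a d (powseq a d n))
    by (apply functional_extensionality; intros j; reflexivity).
  rewrite delta_iter_lin_mul.
  set (e := Nat.iter (S n) delta (powseq a d n)).
  change (Nat.iter (S (S n)) delta (powseq a d n)) with (delta e).
  unfold lin_mul, delta; set (v := shift e m); ring.
Qed.

Lemma genEulerA_out (al de : R) (n : nat) (k : Z) :
  (k < -1 \/ Z.of_nat n <= k)%Z -> genEulerA al de n k = 0.
Proof.
  intros Hk; destruct n as [|n]; simpl.
  - destruct (Z.eqb_spec k (-1)); [lia | reflexivity].
  - destruct (Z.ltb_spec k (-1)), (Z.leb_spec (Z.pos (Pos.of_succ_nat n)) k);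
      simpl; try reflexivity; lia.
Qed.

Lemma genEulerA_rec (al de : R) (n : nat) (k : Z) :
  (-1 <= k < Z.of_nat (S n))%Z ->
  genEulerA al de (S n) k
  = (- al + (IZR k + 2) * de) * genEulerA al de n k
    + (al + (INR (S n) - IZR k - 1) * de) * genEulerA al de n (k - 1).
Proof.
  intros Hk; simpl genEulerA at 1.
  destruct (Z.ltb_spec k (-1)), (Z.leb_spec (Z.pos (Pos.of_succ_nat n)) k);
    simpl; try reflexivity; lia.
Qed.

Lemma delta_iter_powseq (a d : R) (n m : nat) :
  Nat.iter (S n) delta (powseq a d n) m = - genEulerA (a - d) (- d) n (Z.of_nat m - 1).
Proof.
  revert m; induction n as [|n IHn]; intros m.
  - unfold Nat.iter, delta, shift, powseq; destruct m as [|m].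
    + simpl; ring.
    + rewrite genEulerA_out by lia; simpl; ring.
  - rewrite delta_iter_powseq_S, IHn; destruct m as [|m]; cbn [shift].
    + rewrite genEulerA_rec by (simpl; lia).
      rewrite (genEulerA_out _ _ n (-1 - 1)) by lia.
      simpl INR; simpl IZR; ring.
    + rewrite IHn; replace (Z.of_nat (S m) - 1)%Z with (Z.of_nat m) by lia.
      destruct (Z.le_gt_cases (Z.of_nat (S n)) (Z.of_nat m)).
      * rewrite !genEulerA_out by lia; ring.
      * rewrite genEulerA_rec, <- INR_IZR_INZ, !S_INR by lia; ring.
Qed.

Lemma is_series_unique_normed {K : AbsRing} {V : NormedModule K} (u : nat -> V) (l1 l2 : V) :
  is_series u l1 -> is_series u l2 -> l1 = l2.
Proof.
  apply (filterlim_locally_unique (F := eventually)).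
Qed.

Lemma is_series_finite_support {K : AbsRing} {V : NormedModule K} (u : nat -> V) (n : nat) :
  (forall m, (n < m)%nat -> u m = zero) -> is_series u (sum_n u n).
Proof.
  intros Hzero; apply (filterlim_ext_loc (fun _ => sum_n u n)).
  - exists n; intros N HN; induction HN as [|N HN IH]; [reflexivity|].
    rewrite sum_Sn, Hzero, plus_zero_r by lia; exact IH.
  - apply filterlim_const.
Qed.

Lemma is_series_delta (t : C) (x : nat -> R) (L : C) :
  is_series (fun j => (Cpow t j * RtoC (x j))%C) L ->
  is_series (fun j => (Cpow t j * RtoC (delta x j))%C) ((t - 1) * L)%C.
Proof.
  intros HL.
  set (u := fun j => (Cpow t j * RtoC (x j))%C) in HL.
  set (v := fun j => match j with O => RtoC 0 | S j' => u j' end).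
  assert (Hv : is_series v L).
  { apply is_series_decr_1.
    match goal with |- is_series _ ?l => replace l with L; [exact HL|] end.
    change (L = L + - RtoC 0)%C; ring. }
  pose proof (is_series_minus _ _ _ _ (is_series_scal t _ _ Hv) HL) as Hdiff.
  replace ((t - 1) * L)%C with (t * L + - L)%C by ring.
  revert Hdiff; apply is_series_ext; intros j.
  change (t * v j + - u j = Cpow t j * RtoC (delta x j))%C.
  unfold delta; rewrite RtoC_minus; destruct j as [|j]; unfold v, u, shift.
  - simpl; ring.
  - rewrite Cpow_S; ring.
Qed.

Lemma is_series_delta_iter (t : C) (x : nat -> R) (L : C) (k : nat) :
  is_series (fun j => (Cpow t j * RtoC (x j))%C) L ->
  is_series (fun j => (Cpow t j * RtoC (Nat.iter k delta x j))%C) (Cpow (t - 1) k * L)%C.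
Proof.
  intros HL; induction k as [|k IHk]; simpl Nat.iter.
  - replace (Cpow (t - 1) 0 * L)%C with L by (simpl; ring); exact HL.
  - rewrite Cpow_S, <- Cmult_assoc; exact (is_series_delta t _ _ IHk).
Qed.

Lemma is_lim_seq_pow (u : nat -> R) (l : R) (n : nat) :
  is_lim_seq u l -> is_lim_seq (fun j => u j ^ n) (l ^ n).
Proof.
  intros Hu; induction n as [|n IHn]; simpl.
  - apply is_lim_seq_const.
  - exact (is_lim_seq_mult' _ _ _ _ Hu IHn).
Qed.

Lemma is_lim_seq_succ_ratio : is_lim_seq (fun j => (INR j + 2) / (INR j + 1)) 1.
Proof.
  assert (Hinv : is_lim_seq (fun j => / (INR j + 1)) 0).
  { apply (is_lim_seq_ext (fun j => / INR (S j))); [intros j; rewrite S_INR; reflexivity|].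
    apply (is_lim_seq_inv _ p_infty); [|discriminate].
    exact (proj1 (is_lim_seq_incr_1 INR p_infty) is_lim_seq_INR). }
  replace 1 with (1 + 0) by ring.
  apply (is_lim_seq_ext (fun j => 1 + / (INR j + 1))).
  - intros j; pose proof (pos_INR j); field; lra.
  - exact (is_lim_seq_plus' _ _ _ _ (is_lim_seq_const 1) Hinv).
Qed.

Lemma ex_series_geom_poly (r : R) (n : nat) :
  0 < r < 1 -> ex_series (fun j => r ^ j * (INR j + 1) ^ n).
Proof.
  intros Hr.
  assert (Hpos : forall j, 0 < r ^ j * (INR j + 1) ^ n).
  { intros j; pose proof (pos_INR j); apply Rmult_lt_0_compat; apply pow_lt; lra. }
  apply (ex_series_ext (fun j => Rabs (r ^ j * (INR j + 1) ^ n))).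
  { intros j; apply Rabs_pos_eq, Rlt_le, Hpos. }
  apply (ex_series_DAlembert _ r); [lra | intros j; apply Rgt_not_eq, Hpos |].
  replace r with (r * 1 ^ n) at 1 by (rewrite pow1; ring).
  apply (is_lim_seq_ext (fun j => r * ((INR j + 2) / (INR j + 1)) ^ n)).
  - intros j; pose proof (pos_INR j).
    rewrite Rabs_pos_eq by (apply Rlt_le, Rdiv_lt_0_compat; apply Hpos).
    rewrite S_INR; unfold Rdiv; rewrite Rpow_mult_distr, pow_inv; simpl pow.
    replace (INR j + 1 + 1) with (INR j + 2) by ring.
    field; split; apply pow_nonzero; lra.
  - apply (is_lim_seq_mult' _ _ _ _ (is_lim_seq_const r)).
    apply is_lim_seq_pow, is_lim_seq_succ_ratio.
Qed.

Lemma ex_series_Cpow_powseq (a d : R) (n : nat) (t : C) :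
  Cmod t < 1 -> ex_series (fun j => (Cpow t j * RtoC (powseq a d n j))%C).
Proof.
  intros Ht; set (r := (1 + Cmod t) / 2); pose proof (Cmod_ge_0 t).
  assert (Hr : 0 < r < 1) by (unfold r; lra).
  set (B := (Rabs a + Rabs d) ^ n).
  apply (@ex_series_le C_AbsRing C_CompleteNormedModule _
           (fun j => B * (r ^ j * (INR j + 1) ^ n))).
  2: exact (@ex_series_scal_l R_AbsRing R_NormedModule B _ (ex_series_geom_poly r n Hr)).
  intros j; change (norm ?z) with (Cmod z).
  rewrite Cmod_mult, Cmod_pow, Cmod_R; unfold powseq; rewrite <- RPow_abs.
  replace (B * (r ^ j * (INR j + 1) ^ n))
    with (r ^ j * ((Rabs a + Rabs d) * (INR j + 1)) ^ n)
    by (unfold B; rewrite Rpow_mult_distr; ring).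
  pose proof (pos_INR j); pose proof (Rabs_pos a); pose proof (Rabs_pos d).
  apply Rmult_le_compat; try (apply pow_le; auto using Rabs_pos; lra).
  - apply pow_incr; unfold r; lra.
  - apply pow_incr; split; [apply Rabs_pos|].
    eapply Rle_trans; [apply Rabs_triang|].
    rewrite Rabs_mult, (Rabs_pos_eq (INR j)) by lra; nra.
Qed.

Lemma is_series_Cpow_delta_iter_powseq (a d : R) (n : nat) (t : C) :
  is_series (fun j => (Cpow t j * RtoC (Nat.iter (S n) delta (powseq a d n) j))%C)
            (- genEulerT n t (a - d) (- d))%C.
Proof.
  set (u := fun j => (Cpow t j * RtoC (Nat.iter (S n) delta (powseq a d n) j))%C).
  replace (- genEulerT n t (a - d) (- d))%C with (sum_n u n).
  - apply (is_series_finite_support (K := C_AbsRing) (V := C_NormedModule)).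
    intros m Hm; unfold u.
    rewrite delta_iter_powseq, genEulerA_out by lia.
    change (Cpow t m * RtoC (- 0) = RtoC 0)%C; rewrite Ropp_0; ring.
  - assert (Hopp : forall z : C, (- z)%C = @mult C_Ring (Copp 1) z)
      by (intros z; change (- z = Copp 1 * z)%C; ring).
    unfold genEulerT; rewrite Hopp, <- (sum_n_mult_l (K := C_Ring)).
    apply sum_n_ext; intros m; unfold u; rewrite delta_iter_powseq.
    change (Cpow t m * RtoC (- genEulerA (a - d) (- d) n (Z.of_nat m - 1))
            = Copp 1 * (RtoC (genEulerA (a - d) (- d) n (Z.of_nat m - 1)) * Cpow t m))%C.
    rewrite RtoC_opp; ring.
Qed.

Lemma Cmod_lt_1_sub_1_neq_0 (t : C) : Cmod t < 1 -> (t - 1)%C <> RtoC 0.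
Proof.
  intros Ht Heq; replace t with (t - 1 + 1)%C in Ht by ring.
  rewrite Heq, Cplus_0_l, Cmod_1 in Ht; lra.
Qed.

Theorem proposition3p4 (a d : R) (n : nat) (t : C) :
  Cmod t < 1 ->
  is_series (fun j : nat => (Cpow t j * RtoC ((a + INR j * d) ^ n))%C)
            (- (genEulerT n t (a - d) (- d) / Cpow (t - 1) (S n)))%C.
Proof.
  intros Ht; destruct (ex_series_Cpow_powseq a d n t Ht) as [L HL]; change C in L.
  assert (HT : (Cpow (t - 1) (S n) * L)%C = (- genEulerT n t (a - d) (- d))%C).
  { eapply is_series_unique_normed.
    - exact (is_series_delta_iter t _ L (S n) HL).
    - apply is_series_Cpow_delta_iter_powseq. }
  assert (HP : Cpow (t - 1) (S n) <> RtoC 0) by exact (Cpow_nz _ _ (Cmod_lt_1_sub_1_neq_0 t Ht)).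
  replace (- (genEulerT n t (a - d) (- d) / Cpow (t - 1) (S n)))%C with L; [exact HL|].
  replace (genEulerT n t (a - d) (- d)) with (- (Cpow (t - 1) (S n) * L))%C
    by (rewrite HT; ring).
  field; exact HP.
Qed.
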